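(* Let $p_x$ be given, $\beta\in\mathbb{R}$, and let $G(p_{z|x}):=(\beta-1)H(Z)+H(Z|X)$, where $p_z=Q_xp_{z|x}$. If $p_{z|x}$ ranges over $\varepsilon_{z|x}$-infimal conditional pmf vectors, then $G$ is $\sigma_G$-weakly convex with respect to $p_{z|x}$ on this set, where $$\sigma_G:=\max\Big\{\frac{2|\beta-1|N_z}{\varepsilon_{z|x}},\ \frac{2N_zN_x}{\varepsilon_{z|x}}\Big\}.$$
   Context: Finite alphabets $\mathcal{X},\mathcal{Z}$ with $N_x,N_z$ elements, $p(x)>0$ given. $p_{z|x}=(p(z_1|x_1),\dots,p(z_1|x_{N_x}),p(z_2|x_1),\dots,p(z_{N_z}|x_{N_x}))^T$ with $\sum_zp(z|x)=1$ for each $x$; $Q_x:=I_{N_z}\otimes p_x^T$ so that $p_z=Q_xp_{z|x}$ is the marginal $p(z)=\sum_xp(z|x)p(x)$. $H(Z)=-\sum_zp(z)\log p(z)$, $H(Z|X)=-\sum_xp(x)\sum_zp(z|x)\log p(z|x)$. A conditional pmf vector is $\varepsilon$-infimal if its smallest entry equals $\varepsilon>0$ (all entries are $\ge\varepsilon$). $f$ is $\sigma$-weakly convex on a set $S$ if $f(y)\ge f(x)+\langle\nabla f(x),y-x\rangle-\frac\sigma2\|y-x\|^2$ for all $x,y\in S$ (Euclidean norm). *)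

From HB Require Import structures.
From mathcomp Require Import all_boot all_order all_algebra.
From mathcomp Require Import all_classical all_reals all_analysis.
Set Implicit Arguments. Unset Strict Implicit. Unset Printing Implicit Defensive.
Import Order.TTheory GRing.Theory Num.Theory.
Import numFieldNormedType.Exports.
Local Open Scope ring_scope.

(* A conditional pmf p(z|x) is stored as the matrix q : 'M_(Nz, Nx) with
   q z x = p(z|x); row-major vectorisation of q is exactly the paper's vector
   p_{z|x} = (p(z1|x1),...,p(z1|xNx),p(z2|x1),...). *)

Section Defs.
Variables (R : realType) (Nx Nz : nat).

Definition marg (px : 'I_Nx -> R) (q : 'M[R]_(Nz, Nx)) (z : 'I_Nz) : R :=
  \sum_(x < Nx) q z x * px x.

Definition entZ (px : 'I_Nx -> R) (q : 'M[R]_(Nz, Nx)) : R :=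
  - \sum_(z < Nz) marg px q z * ln (marg px q z).

Definition condentZX (px : 'I_Nx -> R) (q : 'M[R]_(Nz, Nx)) : R :=
  - \sum_(x < Nx) px x * \sum_(z < Nz) q z x * ln (q z x).

Definition Gfun (beta : R) (px : 'I_Nx -> R) (q : 'M[R]_(Nz, Nx)) : R :=
  (beta - 1) * entZ px q + condentZX px q.

Definition infimal_condpmf (eps : R) (q : 'M[R]_(Nz, Nx)) : Prop :=
  (forall z x, eps <= q z x) /\ (forall x : 'I_Nx, \sum_(z < Nz) q z x = 1).

Definition grad (f : 'M[R]_(Nz, Nx) -> R) (q : 'M[R]_(Nz, Nx)) : 'M[R]_(Nz, Nx) :=
  \matrix_(z, x) derive1 (fun t : R => f (q + t *: delta_mx z x)) 0.

Definition inner (u v : 'M[R]_(Nz, Nx)) : R := \sum_(z < Nz) \sum_(x < Nx) u z x * v z x.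
Definition sqnorm (u : 'M[R]_(Nz, Nx)) : R := inner u u.

Definition weakly_convex_on (f : 'M[R]_(Nz, Nx) -> R) (S : 'M[R]_(Nz, Nx) -> Prop)
    (sigma : R) : Prop :=
  forall q r, S q -> S r ->
    f q + inner (grad f q) (r - q) - sigma / 2 * sqnorm (r - q) <= f r.

End Defs.

From HB Require Import structures.
From mathcomp Require Import all_boot all_order all_algebra.
From mathcomp Require Import all_classical all_reals all_analysis.
From mathcomp Require Import ring lra.
Set Implicit Arguments. Unset Strict Implicit. Unset Printing Implicit Defensive.
Import Order.TTheory GRing.Theory Num.Theory.
Import numFieldNormedType.Exports.
Local Open Scope ring_scope.

(* Up to sign, [G r - G q - <grad G q, r - q>] is a combination of Bregman divergences
   of [y ln y]: [beta - 1] times those between the marginals [p(z)], and [p(x)] times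
   those between the entries [p(z|x)].  From [ln y <= y - 1], each divergence [D(a, b)]
   lies in [[0, (a - b)^2 / b]], and [b >= eps] both for entries and for marginals,
   which are averages of entries.  Jensen bounds the squared difference of the marginals
   at [z] by the squared differences of the [p(z|x)], so [G] is weakly convex with constant
   [2 (|beta - 1| + 1) / eps], which the stated constant dominates once [Nz >= 2]; for
   [Nz <= 1] the feasible set is a single point. *)

Lemma sum_ord_neq0 (R : nmodType) n (F : 'I_n -> R) : \sum_(i < n) F i != 0 -> (0 < n)%N.
Proof. by case: n F => // F; rewrite big_ord0 eqxx. Qed.

Lemma col_stochastic_le1_eq (R : ringType) n m (q r : 'M[R]_(n, m)) : (n <= 1)%N ->
    (forall x, \sum_(z < n) q z x = 1) -> (forall x, \sum_(z < n) r z x = 1) -> q = r.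
Proof.
case: n q r => [|[|//]] q r _ q_sum r_sum; apply/matrixP => z x; first by case: z.
by rewrite !ord1; move: (q_sum x) (r_sum x); rewrite !big_ord1 => -> ->.
Qed.

Lemma sqr_wsum_le (R : realFieldType) n (w d : 'I_n -> R) :
  (forall i, 0 <= w i) -> \sum_(i < n) w i = 1 ->
  (\sum_(i < n) w i * d i) ^+ 2 <= \sum_(i < n) w i * d i ^+ 2.
Proof.
move=> w0 w1; set mu := \sum_(i < n) w i * d i.
have : 0 <= \sum_(i < n) w i * (d i - mu) ^+ 2.
  by apply: sumr_ge0 => i _; rewrite mulr_ge0 ?sqr_ge0.
have -> : \sum_(i < n) w i * (d i - mu) ^+ 2 =
    \sum_(i < n) w i * d i ^+ 2 - 2 * mu * mu + mu ^+ 2 * \sum_(i < n) w i.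
  rewrite (eq_bigr (fun i => w i * d i ^+ 2 - 2 * mu * (w i * d i) + mu ^+ 2 * w i));
    last by move=> i _; ring.
  by rewrite big_split sumrB /= -!mulr_sumr.
rewrite w1; lra.
Qed.

Lemma weak_convexity_constant_ge (R : realFieldType) (b e : R) (n m : nat) :
    0 < e -> (2 <= n)%N -> (1 <= m)%N ->
  (`|b| + 1) / e <= Num.max (2 * `|b| * n%:R / e) (2 * n%:R * m%:R / e) / 2.
Proof.
move=> e_gt0 n_ge2 m_ge1.
have n2 : 2 <= n%:R :> R by rewrite ler_nat.
have nm2 : 2 <= n%:R * m%:R :> R by rewrite -natrM ler_nat (leq_mul n_ge2 m_ge1).
have ie_gt0 : 0 < e^-1 by rewrite invr_gt0.
have h1 : 0 <= `|b| * e^-1 * (n%:R - 2) by rewrite !mulr_ge0 ?subr_ge0 // ltW.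
have h2 : 0 <= e^-1 * (n%:R * m%:R - 2) by rewrite mulr_ge0 ?subr_ge0 // ltW.
have ha : 2 * `|b| * n%:R / e <= Num.max (2 * `|b| * n%:R / e) (2 * n%:R * m%:R / e).
  by rewrite le_max lexx.
have hb : 2 * n%:R * m%:R / e <= Num.max (2 * `|b| * n%:R / e) (2 * n%:R * m%:R / e).
  by rewrite le_max lexx orbT.
lra.
Qed.

Section XlnX.
Variable R : realType.

Definition xlnx (y : R) : R := y * ln y.

Definition bregman_xlnx (a b : R) : R := xlnx a - xlnx b - (a - b) * (ln b + 1).

Lemma is_derive_xlnx (y : R) : 0 < y -> is_derive y 1 xlnx (ln y + 1).
Proof.
move=> y0; have := is_derive1_ln y0 => ?.
apply: is_derive_eq.
by rewrite [_ *: _]mulfV ?gt_eqF // [_%:A]mulr1 addrC.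
Qed.

Lemma is_derive_xlnx_shift (a c : R) : 0 < a ->
  is_derive (0 : R) 1 (fun t => xlnx (a + c * t)) ((ln a + 1) * c).
Proof.
move=> a0.
have shift : is_derive (0 : R) 1 (cst a + c \*: id) c.
  by apply: is_derive_eq; rewrite add0r [_ *: _]mulr1.
have xd : is_derive ((cst a + c \*: id) 0) 1 xlnx (ln a + 1).
  suff -> : (cst a + c \*: id) 0 = a by exact: is_derive_xlnx.
  by rewrite -[LHS]/(a + c * 0) mulr0 addr0.
exact: is_derive1_comp xd shift.
Qed.

Lemma ln_le_subr1 (y : R) : 0 < y -> ln y <= y - 1.
Proof. by move=> y0; have := @le_ln1Dx R (y - 1); rewrite addrCA subrr addr0; apply; lra. Qed.

Lemma bregman_xlnx_ge0 (a b : R) : 0 < a -> 0 < b -> 0 <= bregman_xlnx a b.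
Proof.
move=> a0 b0; have := ln_le_subr1 (divr_gt0 b0 a0).
rewrite ln_div ?posrE // -(ler_pM2l a0) => h.
have e : a * (b / a - 1) = b - a by field; rewrite gt_eqF.
rewrite /bregman_xlnx /xlnx; lra.
Qed.

Lemma bregman_xlnx_le (a b : R) : 0 < a -> 0 < b ->
  bregman_xlnx a b <= (a - b) ^+ 2 / b.
Proof.
move=> a0 b0; have := ln_le_subr1 (divr_gt0 a0 b0).
rewrite ln_div ?posrE // -(ler_pM2l a0) => h.
have e : (a - b) ^+ 2 / b = a * (a / b - 1) - a + b by field; rewrite gt_eqF.
rewrite /bregman_xlnx /xlnx; lra.
Qed.

Lemma bregman_xlnx_le_inf (e a b : R) : 0 < e -> 0 < a -> e <= b ->
  bregman_xlnx a b <= (a - b) ^+ 2 / e.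
Proof.
move=> e0 a0 eb; have b0 := lt_le_trans e0 eb.
apply: le_trans (bregman_xlnx_le a0 b0) _.
by apply: ler_wpM2l; [exact: sqr_ge0 | rewrite lef_pV2 ?posrE].
Qed.

Lemma sum_bump n (F : 'I_n -> R -> R) (i0 : 'I_n) (c : R) :
  \sum_(i < n) F i ((i == i0)%:R * c) = \sum_(i < n) F i 0 + (F i0 c - F i0 0).
Proof.
rewrite (bigD1 i0) // [in RHS](bigD1 i0) //= eqxx mul1r.
under eq_bigr => i /negbTE -> do rewrite mul0r.
ring.
Qed.

End XlnX.

Section EntropyFunctional.
Variables (R : realType) (Nx Nz : nat) (px : 'I_Nx -> R).
Implicit Types (q r : 'M[R]_(Nz, Nx)) (beta t : R).

Lemma add_delta_mxE q z0 x0 t z x :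
  (q + t *: delta_mx z0 x0) z x = q z x + (z == z0)%:R * ((x == x0)%:R * t).
Proof.
by rewrite !mxE; case: (z == z0); case: (x == x0); rewrite ?mulr1 ?mulr0 ?mul0r ?mul1r.
Qed.

Lemma marg_add_delta q z0 x0 t z :
  marg px (q + t *: delta_mx z0 x0) z = marg px q z + (z == z0)%:R * (px x0 * t).
Proof.
rewrite /marg; under eq_bigr => x _ do rewrite !mxE mulrDl.
rewrite big_split /=; congr (_ + _).
rewrite (bigD1 x0) //= eqxx andbT big1 ?addr0; first by ring.
by move=> x /negbTE x_ne; rewrite x_ne andbF mulr0 mul0r.
Qed.

Lemma entZ_add_delta q z0 x0 t :
  entZ px (q + t *: delta_mx z0 x0) =
  entZ px q - (xlnx (marg px q z0 + px x0 * t) - xlnx (marg px q z0)).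
Proof.
rewrite /entZ; under eq_bigr do rewrite marg_add_delta -/(xlnx _).
rewrite (sum_bump (fun z y => xlnx (marg px q z + y))) addr0.
under eq_bigr do rewrite addr0.
by rewrite opprD.
Qed.

Lemma condentZX_add_delta q z0 x0 t :
  condentZX px (q + t *: delta_mx z0 x0) =
  condentZX px q - px x0 * (xlnx (q z0 x0 + t) - xlnx (q z0 x0)).
Proof.
rewrite /condentZX -opprD; congr (- _).
under eq_bigr => x _.
  under eq_bigr do rewrite add_delta_mxE -/(xlnx _).
  rewrite (sum_bump (fun z y => xlnx (q z x + y))) addr0 mulrDr.
  under eq_bigr do rewrite addr0.
  over.
rewrite big_split /= (sum_bump (fun x y => px x * (xlnx (q z0 x + y) - xlnx (q z0 x)))).
have -> : \sum_(x < Nx) px x * (xlnx (q z0 x + 0) - xlnx (q z0 x)) = 0.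
  by apply: big1 => x _; rewrite addr0 subrr mulr0.
by rewrite addr0 subrr mulr0 subr0 add0r.
Qed.

Lemma grad_Gfun beta q z0 x0 : 0 < q z0 x0 -> 0 < marg px q z0 ->
  grad (Gfun beta px) q z0 x0 =
  - ((beta - 1) * (px x0 * (ln (marg px q z0) + 1)) + px x0 * (ln (q z0 x0) + 1)).
Proof.
move=> q_gt0 m_gt0; rewrite /grad mxE derive1E.
set m := marg px q z0.
have -> : (fun t => Gfun beta px (q + t *: delta_mx z0 x0)) =
    cst (Gfun beta px q) -
    ((beta - 1) \*: ((fun t => xlnx (m + px x0 * t)) - cst (xlnx m)) +
     px x0 \*: ((fun t => xlnx (q z0 x0 + 1 * t)) - cst (xlnx (q z0 x0)))).
  apply/funext => t; rewrite /Gfun entZ_add_delta condentZX_add_delta /=.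
  rewrite !fctE /= mul1r /m -![(beta - 1) *: _]/((beta - 1) * _) -![px x0 *: _]/(px x0 * _).
  ring.
have := is_derive_xlnx_shift (px x0) m_gt0.
have := is_derive_xlnx_shift 1 q_gt0.
move=> ? ?; rewrite derive_val /GRing.scale /= /m.
ring.
Qed.

Lemma Gfun_sum beta q : Gfun beta px q =
  \sum_(z < Nz) (- (beta - 1) * xlnx (marg px q z) - \sum_(x < Nx) px x * xlnx (q z x)).
Proof.
rewrite sumrB /Gfun /entZ /condentZX -mulr_sumr mulNr -mulrN [in RHS]exchange_big /=.
by congr (_ - _); apply: eq_bigr => x _; rewrite mulr_sumr.
Qed.

Lemma marg_sub q r z :
  marg px r z - marg px q z = \sum_(x < Nx) px x * (r z x - q z x).
Proof. by rewrite /marg -sumrB; apply: eq_bigr => x _; ring. Qed.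

Lemma inner_grad_Gfun beta q r :
    (forall z x, 0 < q z x) -> (forall z, 0 < marg px q z) ->
  inner (grad (Gfun beta px) q) (r - q) =
  \sum_(z < Nz) (- (beta - 1) * ((ln (marg px q z) + 1) * (marg px r z - marg px q z))
                 - \sum_(x < Nx) px x * ((ln (q z x) + 1) * (r z x - q z x))).
Proof.
move=> q_gt0 m_gt0; apply: eq_bigr => z _.
rewrite marg_sub mulr_sumr mulr_sumr -sumrB; apply: eq_bigr => x _.
rewrite grad_Gfun // !mxE; ring.
Qed.

Lemma Gfun_bregman beta q r :
    (forall z x, 0 < q z x) -> (forall z, 0 < marg px q z) ->
  Gfun beta px q + inner (grad (Gfun beta px) q) (r - q) - Gfun beta px r =
  \sum_(z < Nz) ((beta - 1) * bregman_xlnx (marg px r z) (marg px q z)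
                 + \sum_(x < Nx) px x * bregman_xlnx (r z x) (q z x)).
Proof.
move=> q_gt0 m_gt0; rewrite inner_grad_Gfun // !Gfun_sum -big_split -sumrB /=.
apply: eq_bigr => z _; rewrite /bregman_xlnx.
rewrite [in RHS](eq_bigr (fun x => px x * xlnx (r z x) - px x * xlnx (q z x)
   - px x * ((ln (q z x) + 1) * (r z x - q z x)))) ?sumrB; last by move=> x _; ring.
ring.
Qed.

Lemma sqnormE (u : 'M[R]_(Nz, Nx)) :
  sqnorm u = \sum_(z < Nz) \sum_(x < Nx) u z x ^+ 2.
Proof. by apply: eq_bigr => z _; apply: eq_bigr => x _; rewrite expr2. Qed.

Lemma sqnorm_ge0 (u : 'M[R]_(Nz, Nx)) : 0 <= sqnorm u.
Proof. by rewrite sqnormE; apply: sumr_ge0 => z _; apply: sumr_ge0 => x _; exact: sqr_ge0. Qed.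

Lemma sqnorm0 : sqnorm (0 : 'M[R]_(Nz, Nx)) = 0.
Proof. by rewrite sqnormE; apply: big1 => z _; apply: big1 => x _; rewrite mxE expr0n. Qed.

Section InfimalBounds.
Hypotheses (px_ge0 : forall x, 0 <= px x) (px_sum : \sum_(x < Nx) px x = 1).
Variable eps : R.
Hypothesis eps_gt0 : 0 < eps.

Lemma px_le1 x : px x <= 1.
Proof. by rewrite -px_sum (bigD1 x) //= lerDl sumr_ge0. Qed.

Lemma marg_ge_inf q : (forall z x, eps <= q z x) -> forall z, eps <= marg px q z.
Proof.
move=> q_ge z; rewrite /marg -[X in X <= _]mulr1 -px_sum mulr_sumr.
by apply: ler_sum => x _; exact: ler_wpM2r.
Qed.

Lemma bregman_column_le beta q r z :
    (forall z x, eps <= q z x) -> (forall z x, eps <= r z x) ->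
  (beta - 1) * bregman_xlnx (marg px r z) (marg px q z)
    + \sum_(x < Nx) px x * bregman_xlnx (r z x) (q z x)
  <= (`|beta - 1| + 1) / eps * \sum_(x < Nx) (r z x - q z x) ^+ 2.
Proof.
move=> q_ge r_ge.
have q_gt0 x : 0 < q z x := lt_le_trans eps_gt0 (q_ge z x).
have r_gt0 x : 0 < r z x := lt_le_trans eps_gt0 (r_ge z x).
set U := (\sum_(x < Nx) (r z x - q z x) ^+ 2) / eps.
have marg_sqr : (marg px r z - marg px q z) ^+ 2 <= \sum_(x < Nx) (r z x - q z x) ^+ 2.
  rewrite marg_sub; apply: le_trans (sqr_wsum_le _ px_ge0 px_sum) _.
  by apply: ler_sum => x _; rewrite ler_piMl ?sqr_ge0 ?px_le1.
have mq_gt0 := lt_le_trans eps_gt0 (marg_ge_inf q_ge z).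
have mr_gt0 := lt_le_trans eps_gt0 (marg_ge_inf r_ge z).
have Bm_ge0 := bregman_xlnx_ge0 mr_gt0 mq_gt0.
have Bm_le : bregman_xlnx (marg px r z) (marg px q z) <= U.
  apply: le_trans (bregman_xlnx_le_inf eps_gt0 mr_gt0 (marg_ge_inf q_ge z)) _.
  by rewrite ler_wpM2r // invr_ge0 ltW.
have Bq_le : \sum_(x < Nx) px x * bregman_xlnx (r z x) (q z x) <= U.
  rewrite /U mulr_suml; apply: ler_sum => x _.
  apply: le_trans (ler_piMl (bregman_xlnx_ge0 (r_gt0 x) (q_gt0 x)) (px_le1 x)) _.
  exact: bregman_xlnx_le_inf eps_gt0 (r_gt0 x) (q_ge z x).
have beta_Bm : (beta - 1) * bregman_xlnx (marg px r z) (marg px q z) <= `|beta - 1| * U.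
  apply: le_trans (ler_wpM2r Bm_ge0 (ler_norm _)) _.
  exact: ler_wpM2l.
have -> : (`|beta - 1| + 1) / eps * \sum_(x < Nx) (r z x - q z x) ^+ 2 = `|beta - 1| * U + U.
  by rewrite /U; ring.
lra.
Qed.

Lemma bregman_sum_le beta q r :
    (forall z x, eps <= q z x) -> (forall z x, eps <= r z x) ->
  \sum_(z < Nz) ((beta - 1) * bregman_xlnx (marg px r z) (marg px q z)
                 + \sum_(x < Nx) px x * bregman_xlnx (r z x) (q z x))
  <= (`|beta - 1| + 1) / eps * sqnorm (r - q).
Proof.
move=> q_ge r_ge; rewrite sqnormE mulr_sumr; apply: ler_sum => z _.
under [X in _ <= _ * X]eq_bigr do rewrite !mxE.
exact: bregman_column_le.
Qed.

End InfimalBounds.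

End EntropyFunctional.

Theorem mainTheorem7 (R : realType) (Nx Nz : nat) (px : 'I_Nx -> R)
    (px_pos : forall x, 0 < px x) (px_sum : \sum_(x < Nx) px x = 1)
    (beta eps : R) (eps_pos : 0 < eps) :
  @weakly_convex_on R Nx Nz (Gfun beta px) (@infimal_condpmf R Nx Nz eps)
    (Num.max (2 * `|beta - 1| * Nz%:R / eps) (2 * Nz%:R * Nx%:R / eps)).
Proof.
move=> q r [q_ge q_sum] [r_ge r_sum].
have px_ge0 x : 0 <= px x := ltW (px_pos x).
have q_gt0 z x : 0 < q z x := lt_le_trans eps_pos (q_ge z x).
have m_gt0 z : 0 < marg px q z := lt_le_trans eps_pos (marg_ge_inf px_ge0 px_sum q_ge z).
rewrite lerBlDl -lerBlDr Gfun_bregman //.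
apply: le_trans (bregman_sum_le px_ge0 px_sum eps_pos beta q_ge r_ge) _.
have [Nz_ge2 | Nz_le1] := leqP 2 Nz.
  apply: ler_wpM2r; first exact: sqnorm_ge0.
  apply: weak_convexity_constant_ge => //.
  by apply: (@sum_ord_neq0 _ _ px); rewrite px_sum oner_eq0.
have -> := col_stochastic_le1_eq Nz_le1 q_sum r_sum.
by rewrite subrr sqnorm0 !mulr0.
Qed.
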